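(* There are no linear first syzygies on $(I_{W_d})_2$.
   Context: Let $P_d$ be a convex polygon with $d\ge 4$ vertices $v_1,\dots,v_d$ over a field $\mathbb{K}$ with no three edge lines concurrent. With ${\bf v}_i=(v_i,1)$, $\alpha_j=|{\bf v}_{j-1}\,{\bf v}_j\,{\bf v}_{j+1}|$, $\ell_j=|{\bf v}_j\,{\bf v}_{j+1}\,{\bf p}|$, ${\bf p}=(x,y,z)$, $b_i=\alpha_i\prod_{j\ne i-1,i}\ell_j$, the Wachspress surface $W_d$ is the closure of the image of $p\mapsto(b_1,\dots,b_d)$, and $(I_{W_d})_2$ is the space of quadrics in $S=\mathbb{K}[x_1,\ldots,x_d]$ vanishing on $W_d$. *)

From HB Require Import structures.
From mathcomp Require Import all_boot all_order all_algebra.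
From mathcomp Require Import mpoly.
Set Implicit Arguments. Unset Strict Implicit. Unset Printing Implicit Defensive.
Import Order.TTheory GRing.Theory Num.Theory.
Local Open Scope ring_scope.

Section Wachspress.
Variable R : realFieldType.
Variable d : nat.
(* vertices v_1..v_d indexed cyclically by 'I_d *)
Variable v : 'I_d -> R * R.

Definition coord3 (a : R * R * R) (j : 'I_3) : R :=
  if val j == 0%N then a.1.1 else if val j == 1%N then a.1.2 else a.2.

Definition det3 (a b c : R * R * R) : R :=
  \det (\matrix_(i < 3, j < 3)
          (if val i == 0%N then coord3 a j
           else if val i == 1%N then coord3 b j else coord3 c j)).

Definition bv (i : 'I_d) : R * R * R := ((v i).1, (v i).2, 1).

Definition alpha (j : 'I_d) : R := det3 (bv (ord_pred j)) (bv j) (bv (ordS j)).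

Definition ell (j : 'I_d) (p : R * R * R) : R := det3 (bv j) (bv (ordS j)) p.

Definition wb (i : 'I_d) (p : R * R * R) : R :=
  alpha i * \prod_(j < d | (j != ord_pred i) && (j != i)) ell j p.

(* strictly convex polygon, vertices listed in cyclic order (either orientation) *)
Definition convex_polygon : Prop :=
  (forall i j : 'I_d, j != i -> j != ordS i -> 0 < det3 (bv i) (bv (ordS i)) (bv j))
  \/ (forall i j : 'I_d, j != i -> j != ordS i -> det3 (bv i) (bv (ordS i)) (bv j) < 0).

(* no three (distinct) edge lines pass through a common point of P^2 *)
Definition no_three_edge_lines_concurrent : Prop :=
  forall i j k : 'I_d, i != j -> j != k -> i != k ->
    forall p : R * R * R, ell i p = 0 -> ell j p = 0 -> ell k p = 0 -> p = (0, 0, 0).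

(* (I_{W_d})_2 : quadrics in S = K[x_1..x_d] vanishing on the image of p |-> (b_1(p),..,b_d(p)),
   hence on its closure W_d *)
Definition in_IW2 (q : {mpoly R[d]}) : Prop :=
  q \is 2.-homog /\ forall p : R * R * R, q.@[fun i => wb i p] = 0.

End Wachspress.

From Pilot Require Import Defs.
From HB Require Import structures.
From mathcomp Require Import all_boot all_order all_algebra.
From mathcomp Require Import mpoly.
From mathcomp Require Import ring lra zify.
Set Implicit Arguments. Unset Strict Implicit. Unset Printing Implicit Defensive.
Import Order.TTheory GRing.Theory Num.Theory.
Local Open Scope ring_scope.

(* A quadric q vanishing on W_d is recorded by its symmetric coefficient matrix
   [qcoef q a b].  Evaluating q at a vertex, where a single b_i survives, and at a
   point of an edge, where two survive, kills the diagonal and the entries (a, a+1).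
   For non-adjacent edges j, k, every b_i vanishes to order one or two along a line
   through the meeting point of ell_j and ell_k; the leading term of q(b) along that
   line is a relation between the entries (j,k), (j,k+1), (j+1,k), (j+1,k+1) with
   nonzero weights.  Going around the polygon, a zero row of the matrix forces the
   next one to vanish, so q = 0 as soon as one row is zero.
   Given a syzygy sum_k l_k q_k = 0 with linear l_k, the coefficient of x_a x_b^2
   shows that the quadric sum_k l_k(e_b) q_k, which lies in (I_W)_2, has a zero b-th
   row; so it is 0, and the linear independence of the q_k gives l_k(e_b) = 0. *)

Lemma sum_supp1 (R : nmodType) (I : finType) (f : I -> R) a :
  (forall i, i != a -> f i = 0) -> \sum_i f i = f a.
Proof. by move=> f0; rewrite (bigD1 a) //= big1 ?addr0. Qed.

Lemma sum_supp_seq (R : nmodType) (I : finType) (f : I -> R) (s : seq I) : uniq s ->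
  (forall i, i \notin s -> f i = 0) -> \sum_i f i = \sum_(i <- s) f i.
Proof.
move=> s_uniq f0; rewrite [LHS](bigID (mem s)) /= [X in _ + X]big1 ?addr0 //.
by rewrite big_uniq.
Qed.

Lemma poly_eq0_nonzero_roots (R : numDomainType) (p : {poly R}) :
  (forall x, x != 0 -> p.[x] = 0) -> p = 0.
Proof.
move=> p0; apply: (roots_geq_poly_eq0 (rs := [seq i.+1%:R | i <- iota 0 (size p)])).
- by apply/allP => x /mapP [i _ ->]; apply/rootP/p0; rewrite pnatr_eq0.
- by rewrite map_inj_uniq ?iota_uniq // => i j /eqP; rewrite eqr_nat => /eqP [].
- by rewrite size_map size_iota.
Qed.

Section Quadrics.
Variables (R : numFieldType) (d : nat).
Implicit Types (q : {mpoly R[d]}) (a b : 'I_d).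

Definition qcoef q a b : R := q@_(U_(a) + U_(b)).
Definition qweight a b : R := if a == b then 1 else 2^-1.
(* Off-diagonal monomials are counted twice in [qform], hence the weight 1/2. *)
Definition qform q (y : 'I_d -> R) : R :=
  \sum_a \sum_b qweight a b * qcoef q a b * (y a * y b).

Lemma qcoefC q a b : qcoef q a b = qcoef q b a.
Proof. by rewrite /qcoef addmC. Qed.

Lemma mdeg2_U2 (m : 'X_{1..d}) : mdeg m = 2%N -> exists a b, m = (U_(a) + U_(b))%MM.
Proof.
move=> m2; have [a a_supp] : exists a, (0 < m a)%N.
  apply/existsP; apply: contraTT isT => /existsPn m0.
  suff : mdeg m = 0%N by rewrite m2.
  by rewrite mdegE big1 // => i _; move: (m0 i); case: (m i).
have m_split : m = ((m - U_(a)) + U_(a))%MM.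
  by rewrite submK //; apply/mnm_lepP => i; rewrite mnm1E; case: eqP => [<-|].
have /mdeg1P [b /eqP mb] : mdeg (m - U_(a))%MM == 1%N.
  by move: m2; rewrite {1}m_split mdegD mdeg1 => ?; apply/eqP; lia.
by exists b, a; rewrite m_split mb.
Qed.

Lemma eq_mnmU2 a b a' b' :
  ((U_(a) + U_(b))%MM == (U_(a') + U_(b'))%MM) =
  ((a == a') && (b == b')) || ((a == b') && (b == a')).
Proof.
apply/idP/idP; last by case/orP => /andP [/eqP-> /eqP->] //; rewrite addmC.
move/eqP => e; have := congr1 (fun m : 'X_{1..d} => m a) e.
rewrite !mnmDE !mnm1E eqxx /=.
have addU_inj c c' : (U_(a) + U_(c) = U_(a) + U_(c'))%MM -> c = c'.
  by move/addmI/eqP; rewrite eq_mnm1 => /eqP.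
case: (a' =P a) => [a'a _|_].
  by move: e; rewrite a'a => /addU_inj ->; rewrite !eqxx.
case: (b' =P a) => [ba _|]; last by case: (b == a).
by move: e; rewrite ba [in RHS]addmC => /addU_inj ->; rewrite !eqxx orbT.
Qed.

Lemma sum_qweight_U2 (f : 'I_d -> 'I_d -> R) a0 b0 : (forall a b, f a b = f b a) ->
  \sum_a \sum_b qweight a b * ((U_(a) + U_(b))%MM == (U_(a0) + U_(b0))%MM)%:R * f a b
  = f a0 b0.
Proof.
move=> fC; case: (a0 =P b0) => [<-|/eqP ab0].
  rewrite (sum_supp1 (a := a0)) => [|a a_neq]; last first.
    by apply: big1 => b _; rewrite eq_mnmU2 (negbTE a_neq) /= mulr0 mul0r.
  rewrite (sum_supp1 (a := a0)) => [|b b_neq]; last first.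
    by rewrite eq_mnmU2 (negbTE b_neq) andbF /= mulr0 mul0r.
  by rewrite /qweight !eqxx /= !mul1r.
rewrite (sum_supp_seq (s := [:: a0; b0])) ?big_cons ?big_nil ?addr0; first last.
- move=> a; rewrite !inE negb_or => /andP [a_a0 a_b0]; apply: big1 => b _.
  by rewrite eq_mnmU2 (negbTE a_a0) (negbTE a_b0) /= mulr0 mul0r.
- by rewrite /= inE ab0.
rewrite (sum_supp1 (a := b0)) => [|b b_neq]; last first.
  by rewrite eq_mnmU2 (negbTE b_neq) eqxx (negbTE ab0) /= mulr0 mul0r.
rewrite (sum_supp1 (a := a0)) => [|b b_neq]; last first.
  by rewrite eq_mnmU2 (negbTE b_neq) eq_sym (negbTE ab0) /= andbF mulr0 mul0r.
rewrite /qweight (negbTE ab0) eq_sym (negbTE ab0) eqxx [(U_(b0) + _)%MM]addmC eqxx.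
by rewrite (fC b0 a0) /=; field.
Qed.

Lemma homog1E (p : {mpoly R[d]}) : p \is 1.-homog -> p = \sum_a p@_(U_(a)) *: 'X_a.
Proof.
move=> p1; apply/mpolyP => m; rewrite (raddf_sum (mcoeff m)) /=.
under eq_bigr do rewrite mcoeffZ mcoeffX.
case: (boolP (mdeg m == 1%N)) => [/mdeg1P [e /eqP ->]|m_deg].
  rewrite (sum_supp1 (a := e)) ?eqxx ?mulr1 // => i ie.
  by rewrite eq_mnm1 (negbTE ie) mulr0.
rewrite (dhomog_nemf_coeff p1 m_deg) big1 // => e _.
by case: eqP => [e_m|]; [move: m_deg; rewrite -e_m mdeg1 | rewrite mulr0].
Qed.

Lemma homog2E q : q \is 2.-homog ->
  q = \sum_a \sum_b (qweight a b * qcoef q a b) *: ('X_a * 'X_b).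
Proof.
move=> q2; apply/mpolyP => m.
have -> : (\sum_a \sum_b (qweight a b * qcoef q a b) *: ('X_a * 'X_b))@_m
          = \sum_a \sum_b qweight a b * qcoef q a b * ((U_(a) + U_(b))%MM == m)%:R.
  rewrite (raddf_sum (mcoeff m)) /=; apply: eq_bigr => a _.
  rewrite (raddf_sum (mcoeff m)) /=; apply: eq_bigr => b _.
  by rewrite -mpolyXD mcoeffZ mcoeffX.
case: (boolP (mdeg m == 2%N)) => [/eqP/mdeg2_U2 [a0 [b0 ->]]|m_deg].
  rewrite -[LHS]/(qcoef q a0 b0) -(sum_qweight_U2 _ _ (qcoefC q)).
  by apply: eq_bigr => a _; apply: eq_bigr => b _; rewrite mulrAC.
rewrite (dhomog_nemf_coeff q2 m_deg) big1 // => a _; rewrite big1 // => b _.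
by case: eqP => [ab_m|]; [move: m_deg; rewrite -ab_m mdegD !mdeg1 | rewrite mulr0].
Qed.

Lemma meval_homog2 q (y : 'I_d -> R) : q \is 2.-homog -> q.@[y] = qform q y.
Proof.
move=> q2; rewrite {1}(homog2E q2) (raddf_sum (meval y)) /=; apply: eq_bigr => a _.
rewrite (raddf_sum (meval y)) /=; apply: eq_bigr => b _.
by rewrite mevalZ mevalM !mevalXU.
Qed.

Lemma qform_eq q (y y' : 'I_d -> R) : y =1 y' -> qform q y = qform q y'.
Proof. by move=> e; apply: eq_bigr => a _; apply: eq_bigr => b _; rewrite !e. Qed.

Lemma qformZ q (y : 'I_d -> R) c : qform q (fun i => c * y i) = c ^+ 2 * qform q y.
Proof.
rewrite /qform mulr_sumr; apply: eq_bigr => a _; rewrite mulr_sumr.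
by apply: eq_bigr => b _; ring.
Qed.

Lemma qform_supp q (y : 'I_d -> R) (s : seq 'I_d) : uniq s ->
  (forall i, i \notin s -> y i = 0) ->
  qform q y = \sum_(a <- s) \sum_(b <- s) qweight a b * qcoef q a b * (y a * y b).
Proof.
move=> s_uniq y0; rewrite /qform (sum_supp_seq s_uniq) => [|a a_s]; last first.
  by apply: big1 => b _; rewrite y0 // mul0r mulr0.
apply: eq_bigr => a _; apply: sum_supp_seq => // b b_s.
by rewrite (y0 b b_s) !mulr0.
Qed.

Lemma qform_supp1 q (y : 'I_d -> R) a : (forall i, i != a -> y i = 0) ->
  qform q y = qcoef q a a * (y a * y a).
Proof.
move=> y0; rewrite (@qform_supp q y [:: a]) // ?big_cons ?big_nil ?addr0.
  by rewrite /qweight eqxx mul1r.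
by move=> i; rewrite inE => /y0.
Qed.

Lemma qform_supp2 q (y : 'I_d -> R) a b : a != b ->
  (forall i, i != a -> i != b -> y i = 0) ->
  qform q y = qcoef q a a * (y a * y a) + qcoef q a b * (y a * y b)
            + qcoef q b b * (y b * y b).
Proof.
move=> ab y0; rewrite (@qform_supp q y [:: a; b]) ?big_cons ?big_nil ?addr0.
- by rewrite /qweight !eqxx (negbTE ab) eq_sym (negbTE ab) (qcoefC q b a); field.
- by rewrite /= ?inE ab.
- by move=> i; rewrite !inE negb_or => /andP [ia ib]; apply: y0.
Qed.

Lemma mcoeff_X_mulU (p : {mpoly R[d]}) a (m : 'X_{1..d}) :
  ('X_a * p)@_(U_(a) + m) = p@_m.
Proof. by rewrite mulrC mcoeffMX. Qed.

Lemma mcoeff_X_mul (p : {mpoly R[d]}) a (m : 'X_{1..d}) :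
  m a = 0%N -> ('X_a * p)@_m = 0.
Proof.
move=> ma; rewrite {1}[p]mpolyE mulr_sumr (raddf_sum (mcoeff m)) /=.
apply: big1 => m' _; rewrite -scalerAr -mpolyXD mcoeffZ mcoeffX.
by case: eqP => [e|]; [move: ma; rewrite -e mnmDE mnm1E eqxx | rewrite mulr0].
Qed.

Lemma mcoeff_homog1_mul (l q : {mpoly R[d]}) a b : l \is 1.-homog -> a != b ->
  (l * q)@_(U_(a) + (U_(b) + U_(b)))
  = l@_(U_(a)) * qcoef q b b + l@_(U_(b)) * qcoef q a b.
Proof.
move=> l1 ab; rewrite {1}(homog1E l1) mulr_suml (raddf_sum (mcoeff _)) /=.
under eq_bigr do rewrite -scalerAl mcoeffZ.
rewrite (@sum_supp_seq _ _ _ [:: a; b]) ?big_cons ?big_nil ?addr0; first last.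
- move=> e; rewrite !inE negb_or => /andP [ea eb].
  rewrite mcoeff_X_mul ?mulr0 // !mnmDE !mnm1E.
  by rewrite eq_sym (negbTE ea) eq_sym (negbTE eb).
- by rewrite /= inE andbT.
rewrite mcoeff_X_mulU.
by rewrite addmA [(U_(a) + U_(b))%MM]addmC -addmA mcoeff_X_mulU.
Qed.

End Quadrics.

Arguments qweight {R d} a b.

Lemma ordS_val d (i : 'I_d) : nat_of_ord (ordS i) = (if i.+1 == d then 0 else i.+1)%N.
Proof.
rewrite /ordS /=; case: eqP => [->|ne]; first exact: modnn.
by apply: modn_small; have := ltn_ord i; lia.
Qed.

Lemma ord_pred_val d (i : 'I_d) :
  nat_of_ord (ord_pred i) = (if nat_of_ord i == 0%N then d.-1 else (nat_of_ord i).-1)%N.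
Proof.
rewrite /ord_pred /=; have := ltn_ord i; case: eqP => [->|ne] lt_i_d.
  by rewrite add0n modn_small //; lia.
have -> : ((i + d).-1 = i.-1 + d)%N by lia.
by rewrite modnDr modn_small //; lia.
Qed.

Lemma iter_ordS_val d n (r : 'I_d) : nat_of_ord (iter n (@ordS d) r) = ((r + n) %% d)%N.
Proof.
elim: n => [|n IH]; first by rewrite addn0 modn_small.
by rewrite iterS /= IH -addn1 modnDml addn1 addnS.
Qed.

Lemma iter_ordS_inj d (r : 'I_d) m m' : (m < d)%N -> (m' < d)%N ->
  iter m (@ordS d) r = iter m' (@ordS d) r -> m = m'.
Proof.
move=> lt_m lt_m' /(congr1 val); rewrite /= !iter_ordS_val => /eqP.
by rewrite eqn_modDl !modn_small // => /eqP.
Qed.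

Lemma iter_ordS_dist d (r a : 'I_d) : a = iter ((a + d - r) %% d) (@ordS d) r.
Proof.
apply: val_inj; rewrite /= iter_ordS_val modnDmr.
have -> : (r + (a + d - r) = a + d)%N by have := ltn_ord r; lia.
by rewrite modnDr modn_small.
Qed.

Lemma ord_pred_iter d (r : 'I_d) : ord_pred r = iter d.-1 (@ordS d) r.
Proof.
apply: val_inj; rewrite /= iter_ordS_val /=; congr (_ %% _)%N.
by have := ltn_ord r; lia.
Qed.

Ltac cyclic_ord_neq :=
  apply/negP => /eqP /(congr1 (@nat_of_ord _)); rewrite ?ordS_val ?ord_pred_val;
  (repeat case: ifP); move=> *; lia.

Section CyclicOrd.
Variable d : nat.
Hypothesis d_gt2 : (2 < d)%N.
Implicit Type i : 'I_d.

Lemma ordS_neq i : ordS i != i.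
Proof. have lt_i_d := ltn_ord i; cyclic_ord_neq. Qed.
Lemma ord_pred_neq i : ord_pred i != i.
Proof. have lt_i_d := ltn_ord i; cyclic_ord_neq. Qed.
Lemma ordS_neq_pred i : ordS i != ord_pred i.
Proof. have lt_i_d := ltn_ord i; cyclic_ord_neq. Qed.
Lemma ordS2_neq i : ordS (ordS i) != i.
Proof. have lt_i_d := ltn_ord i; cyclic_ord_neq. Qed.
Lemma ord_pred2_neq i : ord_pred (ord_pred i) != i.
Proof. have lt_i_d := ltn_ord i; cyclic_ord_neq. Qed.

End CyclicOrd.

Lemma det3E (R : realFieldType) (a b c : R * R * R) :
  det3 a b c = a.1.1 * (b.1.2 * c.2 - b.2 * c.1.2)
             - a.1.2 * (b.1.1 * c.2 - b.2 * c.1.1)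
             + a.2 * (b.1.1 * c.1.2 - b.1.2 * c.1.1).
Proof.
rewrite /det3 (expand_det_row _ ord0) !big_ord_recl big_ord0.
rewrite /cofactor !(expand_det_row _ ord0) !big_ord_recl !big_ord0 /cofactor.
by rewrite !det_mx11 !mxE /= /coord3 /= /bump /=; ring.
Qed.

Definition pcomb (R : realFieldType) (a : R) (p : R * R * R) (b : R) (q : R * R * R) :=
  (a * p.1.1 + b * q.1.1, a * p.1.2 + b * q.1.2, a * p.2 + b * q.2).

Section EdgeForms.
Variables (R : realFieldType) (d : nat) (v : 'I_d -> R * R).

Lemma ell_pcomb j a p b q : ell v j (pcomb a p b q) = a * ell v j p + b * ell v j q.
Proof. by rewrite /ell !det3E /pcomb /=; ring. Qed.

Lemma ell_bv j : ell v j (bv v j) = 0.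
Proof. by rewrite /ell !det3E /=; ring. Qed.

Lemma ell_bvS j : ell v j (bv v (ordS j)) = 0.
Proof. by rewrite /ell !det3E /=; ring. Qed.

End EdgeForms.

Section Wachspress.
Variables (R : realFieldType) (d : nat) (v : 'I_d -> R * R).
Hypothesis d_gt2 : (2 < d)%N.
Hypothesis convex : convex_polygon v.
Hypothesis no_concurrent : no_three_edge_lines_concurrent v.

Local Notation ell := (ell v).
Local Notation bv := (bv v).
Local Notation wb := (wb v).
Local Notation S := (@ordS d).
Local Notation P := (@ord_pred d).

Lemma orientation_sign : exists s : R, [/\ s != 0,
  forall i j, 0 <= s * ell i (bv j) &
  forall i j, j != i -> j != S i -> 0 < s * ell i (bv j)].
Proof.
have ell_adj0 i j : (j == i) || (j == S i) -> ell i (bv j) = 0.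
  by case/orP => /eqP ->; rewrite ?ell_bv ?ell_bvS.
have ell_ge0 (s : R) : (forall i j, j != i -> j != S i -> 0 < s * ell i (bv j)) ->
    forall i j, 0 <= s * ell i (bv j).
  move=> ell_gt0 i j; case: (boolP ((j == i) || (j == S i))) => [/ell_adj0 ->|].
    by rewrite mulr0.
  by rewrite negb_or => /andP [ji jSi]; apply/ltW/ell_gt0.
have [ell_gt0|ell_lt0] := convex.
  have ell1_gt0 i j : j != i -> j != S i -> 0 < 1 * ell i (bv j).
    by rewrite mul1r; apply: ell_gt0.
  by exists 1; split; rewrite ?oner_eq0 //; apply: ell_ge0.
have ellN1_gt0 i j : j != i -> j != S i -> 0 < -1 * ell i (bv j).
  by rewrite mulN1r oppr_gt0; apply: ell_lt0.
by exists (-1); split; rewrite ?oppr_eq0 ?oner_eq0 //; apply: ell_ge0.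
Qed.

Lemma ell_bv_neq0 i j : j != i -> j != S i -> ell i (bv j) != 0.
Proof.
move=> ji jSi; have [s [_ _ ell_pos]] := orientation_sign.
by have := ell_pos i j ji jSi; apply: contraTneq => ->; rewrite mulr0 ltxx.
Qed.

(* Convexity: all vertices lie on the same side of every edge line. *)
Lemma ell_bv_add_neq0 m x z : ell m (bv x) != 0 -> ell m (bv x) + ell m (bv z) != 0.
Proof.
move=> ell_x; have [s [s0 ell_ge0 _]] := orientation_sign.
have sx_gt0 : 0 < s * ell m (bv x) by rewrite lt_def ell_ge0 andbT mulf_neq0.
have sz_ge0 := ell_ge0 m z.
apply: contraTneq sx_gt0 => sum0.
have : s * ell m (bv x) + s * ell m (bv z) = 0 by rewrite -mulrDr sum0 mulr0.
lra.
Qed.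

Lemma alpha_neq0 i : alpha v i != 0.
Proof.
rewrite /alpha -{2}(ord_predK i); apply: ell_bv_neq0; first exact: ordS_neq_pred.
by rewrite ord_predK ordS_neq.
Qed.

Lemma wb_eq0 i p m : m != P i -> m != i -> ell m p = 0 -> wb i p = 0.
Proof.
move=> mPi mi ell0; rewrite /wb (bigD1 m) /=; last by rewrite mPi mi.
by rewrite ell0 mul0r mulr0.
Qed.

Lemma wb_neq0 i p : (forall m, m != P i -> m != i -> ell m p != 0) -> wb i p != 0.
Proof.
move=> ell_neq0; rewrite /wb mulf_neq0 ?alpha_neq0 //.
by apply/prodf_neq0 => m /andP [mPi mi]; apply: ell_neq0.
Qed.

Lemma wb_bv_eq0 i a : i != a -> wb i (bv a) = 0.
Proof.
move=> ia; case: (a =P P i) => [aPi|/eqP aPi].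
  apply: (@wb_eq0 _ _ (P a)).
  - by rewrite aPi (inj_eq (@ord_pred_inj d)) ord_pred_neq.
  - by rewrite aPi ord_pred2_neq.
  - by rewrite -{2}(ord_predK a) ell_bvS.
by apply: (@wb_eq0 _ _ a); rewrite // ?ell_bv // eq_sym.
Qed.

Lemma wb_bv_neq0 a : wb a (bv a) != 0.
Proof.
apply: wb_neq0 => m mPa ma; apply: ell_bv_neq0; first by rewrite eq_sym.
by apply: contra mPa => /eqP ->; rewrite ordSK.
Qed.

Definition edge_point a := pcomb 1 (bv a) 1 (bv (S a)).

Lemma ell_edge_point_neq0 m a : m != a -> ell m (edge_point a) != 0.
Proof.
move=> ma; rewrite ell_pcomb !mul1r; case: (a =P S m) => [aSm|/eqP aSm].
  rewrite addrC; apply: ell_bv_add_neq0; apply: ell_bv_neq0.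
  - by rewrite aSm ordS2_neq.
  - by rewrite (inj_eq (@ordS_inj d)) eq_sym.
by apply: ell_bv_add_neq0; apply: ell_bv_neq0; rewrite // eq_sym.
Qed.

Lemma IW2_qcoef_diag q a : in_IW2 v q -> qcoef q a a = 0.
Proof.
case=> q2 q0; move: (q0 (bv a)); rewrite meval_homog2 // (@qform_supp1 _ _ q _ a).
  move/eqP; rewrite mulf_eq0 => /orP [/eqP //|].
  by rewrite mulf_eq0 orbb (negbTE (wb_bv_neq0 a)).
by move=> i ia; apply: wb_bv_eq0.
Qed.

Lemma IW2_qcoef_succ q a : in_IW2 v q -> qcoef q a (S a) = 0.
Proof.
move=> qI; have [q2 q0] := qI; move: (q0 (edge_point a)).
rewrite meval_homog2 // (@qform_supp2 _ _ q _ a (S a)); first last.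
- move=> i ia iSa; apply: (@wb_eq0 _ _ a).
  + by apply: contra iSa => /eqP ->; rewrite ord_predK.
  + by rewrite eq_sym.
  + by rewrite /edge_point ell_pcomb ell_bv ell_bvS !mulr0 addr0.
- by rewrite eq_sym ordS_neq.
rewrite !IW2_qcoef_diag // !mul0r add0r addr0 => /eqP.
have wb_a : wb a (edge_point a) != 0.
  by apply: wb_neq0 => m _ ma; apply: ell_edge_point_neq0.
have wb_Sa : wb (S a) (edge_point a) != 0.
  by apply: wb_neq0 => m mPSa _; apply: ell_edge_point_neq0; rewrite ordSK in mPSa.
rewrite mulf_eq0 => /orP [/eqP //|].
by rewrite mulf_eq0 (negbTE wb_a) (negbTE wb_Sa).
Qed.


Section Pencil.
Variables j k : 'I_d.
Hypotheses (k_Pj : k != P j) (k_j : k != j) (k_Sj : k != S j).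

Let j_k : j != k. Proof. by rewrite eq_sym. Qed.
Let j_Sk : j != S k. Proof. by apply: contra k_Pj => /eqP ->; rewrite ordSK. Qed.
Let Sj_k : S j != k. Proof. by rewrite eq_sym. Qed.
Let Sj_Sk : S j != S k. Proof. by rewrite (inj_eq (@ordS_inj d)). Qed.
Let j_Sj : j != S j. Proof. by rewrite eq_sym ordS_neq. Qed.
Let k_Sk : k != S k. Proof. by rewrite eq_sym ordS_neq. Qed.

(* The point of the line through [v_j], [v_(j+1)] where [ell_k] vanishes. *)
Definition edge_meet := pcomb (ell k (bv (S j))) (bv j) (- ell k (bv j)) (bv (S j)).
Definition pencil_dir := pcomb 1 (bv j) 1 (bv k).
Definition pencil x := pcomb 1 edge_meet x pencil_dir.

Lemma ell_edge_meet_j : ell j edge_meet = 0.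
Proof. by rewrite /edge_meet ell_pcomb ell_bv ell_bvS !mulr0 addr0. Qed.

Lemma ell_edge_meet_k : ell k edge_meet = 0.
Proof. by rewrite /edge_meet ell_pcomb; ring. Qed.

Lemma edge_meet_neq0 : edge_meet <> (0, 0, 0).
Proof.
have ell_k_Sj : ell k (bv (S j)) != 0 by apply: ell_bv_neq0.
rewrite /edge_meet /pcomb /Defs.bv /= !mulr1 => -[e1 e2 /eqP].
rewrite subr_eq0 => /eqP ell_eq; rewrite -ell_eq in e1 e2.
have bv_eq : bv j = bv (S j).
  have coord_eq (x y : R) : ell k (bv (S j)) * x + - ell k (bv (S j)) * y = 0 -> x = y.
    by rewrite mulNr -mulrBr => /eqP; rewrite mulf_eq0 (negbTE ell_k_Sj) subr_eq0 => /eqP.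
  by rewrite /Defs.bv (coord_eq _ _ e1) (coord_eq _ _ e2).
have : ell (P j) (bv (S j)) != 0.
  by apply: ell_bv_neq0; rewrite ?ordS_neq_pred // ord_predK ordS_neq.
by rewrite -bv_eq -{2}(ord_predK j) ell_bvS eqxx.
Qed.

Lemma ell_edge_meet_neq0 m : m != j -> m != k -> ell m edge_meet != 0.
Proof.
move=> m_j m_k; apply/eqP => ell0; apply: edge_meet_neq0.
by apply: (no_concurrent j_k _ _ ell_edge_meet_j ell_edge_meet_k ell0); rewrite eq_sym.
Qed.

Lemma ell_pencil_dir_j : ell j pencil_dir != 0.
Proof. by rewrite /pencil_dir ell_pcomb ell_bv mulr0 add0r mul1r; apply: ell_bv_neq0. Qed.

Lemma ell_pencil_dir_k : ell k pencil_dir != 0.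
Proof. by rewrite /pencil_dir ell_pcomb ell_bv mulr0 addr0 mul1r; apply: ell_bv_neq0. Qed.

Definition through_meet m := (m == j) || (m == k).

(* [ell m (pencil x)], with the factor [x] split off when [ell_m] passes through the meet. *)
Definition pencil_ell m : {poly R} :=
  if through_meet m then (ell m pencil_dir)%:P
  else (ell m edge_meet)%:P + ell m pencil_dir *: 'X.

Lemma ell_pencil m x :
  ell m (pencil x) = (if through_meet m then x else 1) * (pencil_ell m).[x].
Proof.
rewrite /pencil ell_pcomb mul1r /pencil_ell /through_meet.
case: (boolP ((m == j) || (m == k))) => [/orP [] /eqP ->|_].
- by rewrite ell_edge_meet_j hornerC add0r.
- by rewrite ell_edge_meet_k hornerC add0r.
- by rewrite hornerD hornerC hornerZ hornerX; ring.
Qed.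

Lemma pencil_ell0_neq0 m : (pencil_ell m).[0] != 0.
Proof.
rewrite /pencil_ell /through_meet.
case: (boolP ((m == j) || (m == k))) => [/orP [] /eqP ->|].
- by rewrite hornerC; apply: ell_pencil_dir_j.
- by rewrite hornerC; apply: ell_pencil_dir_k.
rewrite negb_or => /andP [m_j m_k].
by rewrite hornerD hornerC hornerZ hornerX mulr0 addr0; apply: ell_edge_meet_neq0.
Qed.

Definition wb_factor i m := (m != P i) && (m != i).

(* So every [b_i] vanishes at [edge_meet]; here the non-adjacency of [j] and [k] is used. *)
Lemma wb_factor_jk i : wb_factor i j || wb_factor i k.
Proof.
rewrite /wb_factor; apply: contraT; rewrite negb_or !negb_and !negbK.
case/andP => /orP [] /eqP j_i /orP [] /eqP k_i.
- by move: k_j; rewrite j_i k_i eqxx.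
- by move: k_Sj; rewrite j_i k_i ord_predK eqxx.
- by move: k_Pj; rewrite j_i k_i eqxx.
- by move: k_j; rewrite j_i k_i eqxx.
Qed.

Definition pencil_wb i : {poly R} := alpha v i *:
  ((if wb_factor i j && wb_factor i k then 'X else 1) *
   \prod_(m | wb_factor i m) pencil_ell m).

Lemma wb_pencil i x : wb i (pencil x) = x * (pencil_wb i).[x].
Proof.
rewrite /Defs.wb /pencil_wb hornerZ hornerM horner_prod.
rewrite (eq_bigr (fun m => (if through_meet m then x else 1) * (pencil_ell m).[x]));
  last by move=> m _; apply: ell_pencil.
rewrite big_split /= big_mkcond /= (bigD1 j) // (bigD1 k) /=; last first.
  by rewrite eq_sym j_k.
rewrite big1 ?mulr1; last first.
  by move=> m /andP [m_j m_k]; rewrite /through_meet (negbTE m_j) (negbTE m_k); case: ifP.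
rewrite /through_meet !eqxx orbT /=.
have := wb_factor_jk i; rewrite /wb_factor.
by case: (_ && _); case: (_ && _) => //= _; rewrite ?hornerX ?hornerC; ring.
Qed.

Lemma pencil_wb0 i : (pencil_wb i).[0] =
  alpha v i * ((if wb_factor i j && wb_factor i k then 0 else 1) *
               \prod_(m | wb_factor i m) (pencil_ell m).[0]).
Proof.
by rewrite /pencil_wb hornerZ hornerM horner_prod; case: ifP; rewrite ?hornerX ?hornerC.
Qed.

(* Letting the point of the pencil tend to the meet: the quadric vanishes at the limit of
   [(b_i)_i / x], which is supported on [j, S j, k, S k]. *)
Lemma IW2_pencil_limit q : in_IW2 v q -> qform q (fun i => (pencil_wb i).[0]) = 0.
Proof.
case=> q2 q0.
pose G := \sum_a \sum_b (qweight a b * qcoef q a b) *: (pencil_wb a * pencil_wb b).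
have G_horner x : G.[x] = qform q (fun i => (pencil_wb i).[x]).
  rewrite /G /qform horner_sum; apply: eq_bigr => a _.
  by rewrite horner_sum; apply: eq_bigr => b _; rewrite hornerZ hornerM.
suff G0 : G = 0 by rewrite -G_horner G0 horner0.
apply: poly_eq0_nonzero_roots => x x_neq0; rewrite G_horner.
have := q0 (pencil x); rewrite meval_homog2 //.
rewrite (@qform_eq _ _ q _ (fun i => x * (pencil_wb i).[x])); last by move=> i; apply: wb_pencil.
by rewrite qformZ => /eqP; rewrite mulf_eq0 expf_eq0 (negbTE x_neq0) andbF => /eqP.
Qed.

Lemma IW2_pencil_relation q : in_IW2 v q -> exists y : 'I_d -> R,
  [/\ y j != 0, y (S j) != 0, y k != 0, y (S k) != 0 &
   qcoef q j k * (y j * y k) + qcoef q j (S k) * (y j * y (S k)) +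
   qcoef q (S j) k * (y (S j) * y k) + qcoef q (S j) (S k) * (y (S j) * y (S k)) = 0].
Proof.
move=> qI; pose y i := (pencil_wb i).[0].
have y_neq0 i : ~~ (wb_factor i j && wb_factor i k) -> y i != 0.
  move=> not_both; rewrite /y pencil_wb0 (negbTE not_both) mul1r mulf_neq0 ?alpha_neq0 //.
  by apply/prodf_neq0 => m _; apply: pencil_ell0_neq0.
exists y; split.
- by apply: y_neq0; rewrite /wb_factor eqxx andbF.
- by apply: y_neq0; rewrite /wb_factor ordSK eqxx.
- by apply: y_neq0; rewrite /wb_factor eqxx !andbF.
- by apply: y_neq0; rewrite /wb_factor ordSK eqxx !andbF.
have y0 i : i \notin [:: j; S j; k; S k] -> y i = 0.
  rewrite !inE !negb_or => /and4P [i_j i_Sj i_k i_Sk].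
  rewrite /y pencil_wb0 /wb_factor ![_ == i]eq_sym i_j i_k /=.
  have -> : j != P i by apply: contra i_Sj => /eqP ->; rewrite ord_predK.
  have -> : k != P i by apply: contra i_Sk => /eqP ->; rewrite ord_predK.
  by rewrite mul0r mulr0.
have jk_uniq : uniq [:: j; S j; k; S k].
  by rewrite /= !inE !negb_or j_Sj j_k j_Sk Sj_k Sj_Sk k_Sk.
have := IW2_pencil_limit qI; rewrite (qform_supp _ jk_uniq y0) !big_cons big_nil.
rewrite ?big_cons ?big_nil ?addr0 /qweight !eqxx.
rewrite ![S j == j]eq_sym ![k == j]eq_sym ![S k == j]eq_sym ![k == S j]eq_sym.
rewrite ![S k == S j]eq_sym ![S k == k]eq_sym.
rewrite (negbTE j_Sj) (negbTE j_k) (negbTE j_Sk) (negbTE Sj_k) (negbTE Sj_Sk) (negbTE k_Sk).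
rewrite !(IW2_qcoef_diag _ qI) (qcoefC q (S j) j) (qcoefC q (S k) k).
rewrite (IW2_qcoef_succ j qI) (IW2_qcoef_succ k qI).
rewrite (qcoefC q k j) (qcoefC q k (S j)) (qcoefC q (S k) j) (qcoefC q (S k) (S j)).
by move=> E; rewrite -[RHS]E; field.
Qed.

End Pencil.

Lemma IW2_row_succ q r : in_IW2 v q -> (forall a, qcoef q r a = 0) ->
  forall a, qcoef q (S r) a = 0.
Proof.
move=> qI row_r.
have far t : (t <= d - 3)%N -> qcoef q (S r) (iter t.+2 S r) = 0.
  elim: t => [|t IH] t_le; first exact: (IW2_qcoef_succ (S r) qI).
  set k := iter t.+2 S r.
  have iter_neq m : (m < t.+2)%N -> k != iter m S r.
    by move=> lt_m; apply/eqP => /iter_ordS_inj; lia.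
  have k_Pr : k != P r by rewrite ord_pred_iter; apply/eqP => /iter_ordS_inj; lia.
  have [y [_ ySr_neq0 _ ySk_neq0 rel]] :=
    IW2_pencil_relation k_Pr (iter_neq 0%N isT) (iter_neq 1%N isT) qI.
  move: rel; rewrite !row_r !mul0r !add0r IH ?mul0r ?add0r; last by lia.
  rewrite -[iter t.+3 S r]/(S k) => /eqP.
  rewrite !mulf_eq0 => /or3P [/eqP //|/eqP y0|/eqP y0].
  - by case: (elimN eqP ySr_neq0 y0).
  - by case: (elimN eqP ySk_neq0 y0).
move=> a; rewrite (iter_ordS_dist r a).
have : ((a + d - r) %% d < d)%N by rewrite ltn_mod; have := ltn_ord r; lia.
case: ((a + d - r) %% d)%N => [_|[_|t t_lt]].
- by rewrite /= qcoefC row_r.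
- exact: (IW2_qcoef_diag (S r) qI).
- by apply: far; lia.
Qed.

Lemma IW2_eq0_of_row q b : in_IW2 v q -> (forall a, qcoef q b a = 0) -> q = 0.
Proof.
move=> qI row_b.
have rows n a : qcoef q (iter n S b) a = 0.
  by elim: n a => //= n IH; apply: IW2_row_succ.
apply/mpolyP => m; rewrite mcoeff0; case: (boolP (mdeg m == 2%N)) => m_deg.
  by have [a [c ->]] := mdeg2_U2 (eqP m_deg); rewrite (iter_ordS_dist b a); apply: rows.
exact: dhomog_nemf_coeff qI.1 m_deg.
Qed.

End Wachspress.

Lemma in_IW2_lincomb (R : realFieldType) d (v : 'I_d -> R * R) n
    (c : 'I_n -> R) (q : 'I_n -> {mpoly R[d]}) :
  (forall k, in_IW2 v (q k)) -> in_IW2 v (\sum_(k < n) c k *: q k).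
Proof.
move=> qI; split.
  by apply: rpred_sum => k _; apply: rpredZ; exact: (qI k).1.
move=> p; rewrite (raddf_sum (meval _)) /=.
by apply: big1 => k _; rewrite mevalZ (qI k).2 mulr0.
Qed.

(* The coefficient of [x_a x_b^2] in a linear syzygy [sum_k l_k q_k = 0]. *)
Lemma linear_syzygy_qcoef (R : numFieldType) d n (l q : 'I_n -> {mpoly R[d]}) a b :
  (forall k, l k \is 1.-homog) -> (forall k, qcoef (q k) b b = 0) ->
  \sum_(k < n) l k * q k = 0 -> a != b ->
  qcoef (\sum_(k < n) (l k)@_(U_(b)) *: q k) a b = 0.
Proof.
move=> l1 q_diag syz ab.
have := congr1 (mcoeff (U_(a) + (U_(b) + U_(b)))) syz.
rewrite mcoeff0 (raddf_sum (mcoeff _)) /= => syz_ab.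
rewrite /qcoef (raddf_sum (mcoeff _)) /= -[RHS]syz_ab; apply: eq_bigr => k _.
by rewrite mcoeffZ mcoeff_homog1_mul // q_diag mulr0 add0r.
Qed.

Theorem corollary3p9 (R : realFieldType) (d : nat) (v : 'I_d -> R * R) :
  (4 <= d)%N ->
  convex_polygon v ->
  no_three_edge_lines_concurrent v ->
  forall (n : nat) (q : 'I_n -> {mpoly R[d]}),
    (forall k, in_IW2 v (q k)) ->
    (forall c : 'I_n -> R, \sum_(k < n) c k *: q k = 0 -> forall k, c k = 0) ->
  forall l : 'I_n -> {mpoly R[d]},
    (forall k, l k \is 1.-homog) ->
    \sum_(k < n) l k * q k = 0 ->
    forall k, l k = 0.
Proof.
move=> d_ge4 convex no_concurrent n q qI q_indep l l1 syz k.
have d_gt2 : (2 < d)%N by apply: ltnW.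
suff l_coef0 : forall b i, (l i)@_(U_(b)) = 0.
  by rewrite (homog1E (l1 k)); apply: big1 => e _; rewrite l_coef0 scale0r.
move=> b; pose c i := (l i)@_(U_(b)).
have q_diag i : qcoef (q i) b b = 0 := IW2_qcoef_diag d_gt2 convex b (qI i).
have combI : in_IW2 v (\sum_(k < n) c k *: q k) := in_IW2_lincomb c qI.
have comb0 : \sum_(k < n) c k *: q k = 0.
  apply: (IW2_eq0_of_row d_gt2 convex no_concurrent combI (b := b)) => a.
  case: (a =P b) => [->|/eqP ab]; first exact: (IW2_qcoef_diag d_gt2 convex b combI).
  by rewrite qcoefC linear_syzygy_qcoef.
exact: q_indep comb0.
Qed.
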